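(* A graph $G$ has exactly one Grundy dominating set (i.e., is a unique Grundy domination graph) if and only if $G$ has no edges.
   Context: For a graph $G$, $N[v]$ denotes the closed neighborhood of $v$ (the vertex together with its neighbors). A sequence $(v_1,\ldots,v_k)$ of distinct vertices is a closed neighborhood sequence if $N[v_i]\setminus\bigcup_{j=1}^{i-1}N[v_j]\neq\emptyset$ for each $i\in[k]$. The Grundy domination number $\gamma_{gr}(G)$ is the maximum length of a closed neighborhood sequence; the set of vertices of such a maximum-length sequence is a Grundy dominating set. *)

From mathcomp Require Import all_boot.
Set Implicit Arguments. Unset Strict Implicit. Unset Printing Implicit Defensive.

Definition simple_graph (T : finType) (e : rel T) : Prop :=
  symmetric e /\ irreflexive e.

Definition cnbhd (T : finType) (e : rel T) (v : T) : {set T} :=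
  [set u | (u == v) || e v u].

Definition cnbhd_seq (T : finType) (e : rel T) (s : seq T) : {set T} :=
  \bigcup_(v <- s) cnbhd e v.

Definition is_cn_seq (T : finType) (e : rel T) (s : seq T) : Prop :=
  uniq s /\
  forall (s1 s2 : seq T) (v : T), s = s1 ++ v :: s2 ->
    cnbhd e v :\: cnbhd_seq e s1 != set0.

Definition is_grundy_number (T : finType) (e : rel T) (k : nat) : Prop :=
  (exists s, is_cn_seq e s /\ size s = k) /\
  (forall s, is_cn_seq e s -> size s <= k).

Definition grundy_dominating_set (T : finType) (e : rel T) (D : {set T}) : Prop :=
  exists s, is_cn_seq e s /\ D = [set x in s] /\
    (forall t, is_cn_seq e t -> size t <= size s).

Definition unique_grundy_domination (T : finType) (e : rel T) : Prop :=
  exists D, grundy_dominating_set e D /\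
    forall D', grundy_dominating_set e D' -> D' = D.

Definition edgeless (T : finType) (e : rel T) : Prop :=
  forall u v : T, ~~ e u v.

From mathcomp Require Import all_boot.
Set Implicit Arguments. Unset Strict Implicit. Unset Printing Implicit Defensive.

(* If an edge exists, take a maximum closed neighborhood sequence s. It
   dominates the graph, so it contains a non-isolated vertex; let w be the
   last one, s = a ++ w :: b with b isolated. A footprint x of w lies in
   N[y] for some neighbor y of w, and y occurs nowhere in s, so
   a ++ y :: b is another maximum sequence with a different vertex set.
   In an edgeless graph every duplicate-free sequence qualifies, so the
   whole vertex set is the only Grundy dominating set. *)

Lemma split_last_predC (A : Type) (P : pred A) (s : seq A) : ~~ all P s ->
  exists a x b, [/\ s = a ++ x :: b, ~~ P x & all P b].
Proof.
elim/last_ind: s => [//|s x IHs]; rewrite all_rcons negb_and.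
case: (boolP (P x)) => [Px /= /IHs [a [y [b [-> notPy Pb]]]] | notPx _].
  by exists a, y, (rcons b x); rewrite rcons_cat all_rcons Px Pb.
by exists s, x, [::]; rewrite cats1.
Qed.

Section ClosedNeighborhoodSequences.
Variables (T : finType) (e : rel T).

Lemma cnbhd_seq0 : cnbhd_seq e [::] = set0.
Proof. by rewrite /cnbhd_seq big_nil. Qed.

Lemma cnbhd_seq_cons v s : cnbhd_seq e (v :: s) = cnbhd e v :|: cnbhd_seq e s.
Proof. by rewrite /cnbhd_seq big_cons. Qed.

Lemma cnbhd_seqP x s :
  reflect (exists2 v, v \in s & x \in cnbhd e v) (x \in cnbhd_seq e s).
Proof. by rewrite /cnbhd_seq bigcup_seq; apply: bigcupP. Qed.

(* [cn_seq_from A s]: s is a closed neighborhood sequence once the vertices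
   of A are already dominated. *)
Fixpoint cn_seq_from (A : {set T}) (s : seq T) : bool :=
  if s is v :: s' then ~~ (cnbhd e v \subset A) && cn_seq_from (A :|: cnbhd e v) s'
  else true.

Lemma cn_seq_fromP A s :
  reflect (forall s1 s2 v, s = s1 ++ v :: s2 ->
             ~~ (cnbhd e v \subset A :|: cnbhd_seq e s1))
          (cn_seq_from A s).
Proof.
elim: s A => [|v s IHs] A /=.
  by apply: ReflectT => -[].
apply: (iffP andP) => [[newv /IHs news] [|w s1] s2 u /= [<-]|H].
- by rewrite cnbhd_seq0 setU0.
- by move=> eq_s; rewrite cnbhd_seq_cons setUA; apply: news eq_s.
split; first by have := H [::] s v erefl; rewrite cnbhd_seq0 setU0.
apply/IHs => s1 s2 u eq_s.
by rewrite -setUA -cnbhd_seq_cons; apply: H; rewrite eq_s.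
Qed.

Lemma cn_seq_from_cat A s t :
  cn_seq_from A (s ++ t) = cn_seq_from A s && cn_seq_from (A :|: cnbhd_seq e s) t.
Proof.
elim: s A => [|v s IHs] A /=; first by rewrite cnbhd_seq0 setU0.
by rewrite IHs cnbhd_seq_cons setUA andbA.
Qed.

Lemma cn_seq_from_notsub A s v :
  cn_seq_from A s -> v \in s -> ~~ (cnbhd e v \subset A).
Proof.
elim: s A => [//|u s IHs] A /= /andP [newu news].
rewrite inE => /predU1P [-> //|vs].
by apply: contra (IHs _ news vs) => /subset_trans; apply; apply: subsetUl.
Qed.

(* A repeated vertex has no footprint: N[v] is dominated after its first
   occurrence. *)
Lemma cn_seq_from_uniq A s : cn_seq_from A s -> uniq s.
Proof.
elim: s A => [//|v s IHs] A /= /andP [_ news].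
rewrite (IHs _ news) andbT; apply/negP => /(cn_seq_from_notsub news).
by rewrite subsetUr.
Qed.

Lemma is_cn_seqP s : reflect (is_cn_seq e s) (cn_seq_from set0 s).
Proof.
apply: (iffP idP) => [news|[_ H]]; last first.
  by apply/cn_seq_fromP => s1 s2 v /H; rewrite set0U setD_eq0.
split=> [|s1 s2 v /(cn_seq_fromP _ _ news)]; first exact: cn_seq_from_uniq news.
by rewrite set0U setD_eq0.
Qed.

Lemma max_cn_seq_dominating s :
  is_cn_seq e s -> (forall t, is_cn_seq e t -> size t <= size s) ->
  cnbhd_seq e s = setT.
Proof.
move=> cn_s max_s; apply/setP => u; rewrite inE; apply/negPn/negP => Nu.
have : is_cn_seq e (s ++ [:: u]).
  move/is_cn_seqP: cn_s => cn_s.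
  apply/is_cn_seqP; rewrite cn_seq_from_cat cn_s /= set0U andbT.
  by apply/subsetPn; exists u; rewrite // inE eqxx.
by move/max_s; rewrite size_cat addn1 ltnn.
Qed.

Definition isolated (x : T) : bool := [forall y, ~~ e x y].

Lemma cnbhd_isolated x : isolated x -> cnbhd e x = [set x].
Proof. by move/forallP => Nx; apply/setP => y; rewrite !inE (negbTE (Nx y)) orbF. Qed.

Lemma cn_seq_from_isolated (A : {set T}) b :
  all isolated b -> uniq b -> {in b, forall z, z \notin A} -> cn_seq_from A b.
Proof.
elim: b A => [//|z b IHb] A /= /andP [iz ib] /andP [zb ub] bA.
rewrite cnbhd_isolated // sub1set bA ?mem_head //=.
apply: IHb => // y yb; rewrite !inE negb_or bA ?inE ?yb ?orbT //=.
by apply: contraNneq zb => <-.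
Qed.

Lemma edgeless_is_cn_seq s : edgeless e -> is_cn_seq e s <-> uniq s.
Proof.
move=> no_edge; split=> [/is_cn_seqP /cn_seq_from_uniq //|us].
apply/is_cn_seqP/cn_seq_from_isolated => // [|z _]; last by rewrite inE.
by apply/allP => z _; apply/forallP.
Qed.

Lemma edgeless_grundy_dominating_set D :
  edgeless e -> grundy_dominating_set e D <-> D = setT.
Proof.
move=> no_edge; have cn_enum := (edgeless_is_cn_seq (enum T) no_edge).2 (enum_uniq T).
split=> [[s [/(edgeless_is_cn_seq _ no_edge) us [-> max_s]]]|->].
  apply/eqP; rewrite eqEcard subsetT cardsT cardsE (card_uniqP us) cardT.
  exact: max_s cn_enum.
exists (enum T); split=> //; split=> [|t /(edgeless_is_cn_seq _ no_edge) ut].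
  by apply/setP => x; rewrite !inE mem_enum.
by rewrite -cardT -(card_uniqP ut) max_card.
Qed.

Hypotheses (e_sym : symmetric e) (e_irr : irreflexive e).

Lemma cnbhd_neighbor_cover w x : ~~ isolated w -> x \in cnbhd e w ->
  exists2 y, e w y & x \in cnbhd e y.
Proof.
move=> /forallPn [y]; rewrite negbK => ewy; rewrite inE.
case/orP=> [/eqP -> | ewx]; first by exists y; rewrite // inE e_sym ewy orbT.
by exists x; rewrite // inE eqxx.
Qed.

Lemma cn_seq_swap_last a w b :
  is_cn_seq e (a ++ w :: b) -> ~~ isolated w -> all isolated b ->
  exists2 y, y \notin a ++ w :: b & is_cn_seq e (a ++ y :: b).
Proof.
move=> /is_cn_seqP; rewrite cn_seq_from_cat /= set0U.
move=> /and3P [cn_a /subsetPn [x xw xa] cn_b] Nw ib.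
have [y ewy xy] := cnbhd_neighbor_cover Nw xw.
have ya : y \notin a by apply: contra xa => ya; apply/cnbhd_seqP; exists y.
have Ny : ~~ isolated y by apply/forallPn; exists w; rewrite negbK e_sym.
have yb : y \notin b by apply: contra Ny; apply: (allP ib).
exists y.
  rewrite mem_cat inE !negb_or ya yb /= andbT.
  by apply: contraTneq ewy => ->; rewrite e_irr.
apply/is_cn_seqP; rewrite cn_seq_from_cat cn_a /= set0U.
apply/andP; split; first by apply/subsetPn; exists x.
apply: cn_seq_from_isolated => [//||z zb]; first exact: cn_seq_from_uniq cn_b.
have iz := allP ib z zb.
have := cn_seq_from_notsub cn_b zb; rewrite cnbhd_isolated // sub1set.
rewrite !inE !negb_or => /andP [-> _] /=; rewrite e_sym (forallP iz) andbT.
by apply: contraNneq Ny => <-.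
Qed.

End ClosedNeighborhoodSequences.

Theorem corollary4p3 (T : finType) (e : rel T) :
  simple_graph e ->
  (unique_grundy_domination e <-> edgeless e).
Proof.
case=> e_sym e_irr; split; last first.
  move=> no_edge; have gdsE D := edgeless_grundy_dominating_set D no_edge.
  by exists setT; split=> [|D /gdsE]; first exact/gdsE.
case=> _ [[s [cn_s [-> max_s]]] unique_D] u v; apply/negP => euv.
have Nu : ~~ isolated e u by apply/forallPn; exists v; rewrite negbK.
have /cnbhd_seqP [w ws uw] : u \in cnbhd_seq e s.
  by rewrite (max_cn_seq_dominating cn_s max_s) inE.
have Nw : ~~ isolated e w.
  by apply: contra Nu => iw; move: uw; rewrite cnbhd_isolated // inE => /eqP ->.
have [a [w' [b [eq_s Nw' ib]]]] : exists a x b,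
    [/\ s = a ++ x :: b, ~~ isolated e x & all (isolated e) b].
  by apply: split_last_predC; apply/allPn; exists w.
rewrite eq_s in cn_s max_s.
have [y ys cn_t] := cn_seq_swap_last e_sym e_irr cn_s Nw' ib.
have gds_t : grundy_dominating_set e [set x in a ++ y :: b].
  by exists (a ++ y :: b); split=> //; split=> // t /max_s; rewrite !size_cat.
move/unique_D/setP/(_ y): gds_t; rewrite !inE eq_s (negbTE ys) mem_cat inE eqxx.
by rewrite orbT.
Qed.
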